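(* Let $X$ be a finite set with $n=|X|$, let $r\ge 2$, and let $\tau$ be a non-empty subset of $\binom{X}{r}$ with $L(\tau)=X$. If $\tau$ is thin, then: (i) $|\tau|\le n-r+1$; (ii) there exists $x\in X$ with $n_\tau(x)\le r-1$; (iii) for any subset $B\subseteq X$ with $|B|=r-1$, the (multi)collection of sets $\{S-B : S\in\tau\}$ has a system of distinct representatives.
   Context: $\binom{X}{r}$ denotes the set of $r$-element subsets of $X$. For a collection $\tau$ of subsets of $X$, $L(\tau)=\bigcup_{s\in\tau}s$. For $\tau\subseteq\binom{X}{r}$ non-empty, the excess is ${\rm exc}(\tau)=|L(\tau)|-|\tau|-(r-1)$, and $\tau$ is thin if ${\rm exc}(\tau')\ge 0$ for every non-empty $\tau'\subseteq\tau$. For $x\in X$, $n_\tau(x)$ is the number of sets in $\tau$ containing $x$. A collection of (not necessarily distinct) sets $B_1,\dots,B_m$ has a system of distinct representatives if one can choose $x_i\in B_i$ for each $i$ with $x_1,\dots,x_m$ pairwise distinct. *)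

From mathcomp Require Import all_boot all_order all_algebra.
Set Implicit Arguments. Unset Strict Implicit. Unset Printing Implicit Defensive.
Import GRing.Theory Num.Theory.

Definition Lset (X : finType) (tau : {set {set X}}) : {set X} :=
  \bigcup_(S in tau) S.

Definition exc (X : finType) (r : nat) (tau : {set {set X}}) : int :=
  (#|Lset tau|%:Z - #|tau|%:Z - (r%:Z - 1))%R.

Definition thin (X : finType) (r : nat) (tau : {set {set X}}) : Prop :=
  forall tau' : {set {set X}}, tau' \subset tau -> tau' != set0 ->
    (0 <= exc r tau')%R.

Definition ndeg (X : finType) (tau : {set {set X}}) (x : X) : nat :=
  #|[set S in tau | x \in S]|.

(* The family (B_S)_{S in tau} (indexed by tau, so repetitions allowed)
   has a system of distinct representatives. *)
Definition has_SDR (X : finType) (tau : {set {set X}}) (Bf : {set X} -> {set X}) : Prop :=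
  exists f : {set X} -> X,
    {in tau, forall S, f S \in Bf S} /\ {in tau &, injective f}.

From mathcomp Require Import all_boot all_order all_algebra zify.

(* Part (i) is thinness applied to tau itself.  Part (ii) is double counting:
   the degrees add up to r |tau| <= r (n - 1), so some degree is below r.
   Part (iii) is Hall's marriage theorem: for non-empty J in tau, thinness
   gives |L(J)| >= |J| + r - 1, and removing the r - 1 points of B leaves
   |L(J) - B| >= |J|. *)

Lemma bigcup_setD (I T : finType) (K : {set I}) (A : I -> {set T}) (U : {set T}) :
  \bigcup_(i in K) (A i :\: U) = (\bigcup_(i in K) A i) :\: U.
Proof. by rewrite setDE big_distrl; apply: eq_bigr => i _; rewrite setDE. Qed.

Section Hall.

Set Implicit Arguments.
Unset Strict Implicit.

Variables (I T : finType).
Implicit Types (A : I -> {set T}) (P J K : {set I}) (U : {set T}) (f : I -> T).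

Definition hall_cond A P :=
  forall J, J \subset P -> #|J| <= #|\bigcup_(i in J) A i|.

Definition is_sdr A P f := {in P, forall i, f i \in A i} /\ {in P &, injective f}.

Lemma hall_cond_sub A P J : J \subset P -> hall_cond A P -> hall_cond A J.
Proof. by move=> sJP hP K sKJ; apply/hP/(subset_trans sKJ). Qed.

Lemma is_sdr_glue A P J U f1 f2 :
    is_sdr A J f1 -> {in J, forall i, f1 i \in U} ->
    is_sdr (fun i => A i :\: U) (P :\: J) f2 ->
  is_sdr A P (fun i => if i \in J then f1 i else f2 i).
Proof.
move=> [f1A f1inj] f1U [f2A f2inj].
have f2AU i : i \in P -> i \notin J -> f2 i \in A i /\ f2 i \notin U.
  by move=> iP iJ; have := f2A i; rewrite !inE iJ iP => /(_ isT) /andP[].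
split=> [i iP | i k iP kP].
  by case: ifP => iJ; [exact: f1A | case: (f2AU i iP (negbT iJ))].
case: ifP => iJ; case: ifP => kJ.
- exact: f1inj.
- by move=> e; case: (f2AU k kP (negbT kJ)); rewrite -e f1U.
- by move=> e; case: (f2AU i iP (negbT iJ)); rewrite e f1U.
- by apply: f2inj; rewrite inE ?iJ ?kJ.
Qed.

Lemma hall_cond_tight A P J :
    hall_cond A P -> J \subset P -> #|\bigcup_(i in J) A i| <= #|J| ->
  hall_cond (fun i => A i :\: \bigcup_(j in J) A j) (P :\: J).
Proof.
set U := \bigcup_(j in J) A j; move=> hP sJP tightJ K sK; rewrite bigcup_setD.
have sKP : K \subset P by apply: subset_trans sK (subsetDl P J).
have dKJ : [disjoint K & J].
  by rewrite disjoints_subset (subset_trans sK) // setDE subsetIr.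
have hKJ : #|K :|: J| <= #|\bigcup_(i in K :|: J) A i|.
  by rewrite hP // subUset sKP sJP.
rewrite bigcup_setU -/U cardsU (disjoint_setI0 dKJ) cards0 subn0 in hKJ.
have -> : (\bigcup_(i in K) A i) :\: U = (\bigcup_(i in K) A i :|: U) :\: U.
  by rewrite setDUl setDv setU0.
rewrite cardsDS ?subsetUr //; lia.
Qed.

Lemma hall_cond_surplus A P i0 x :
    (forall J, J \subset P -> J != set0 -> J != P ->
       #|J| < #|\bigcup_(i in J) A i|) ->
    i0 \in P ->
  hall_cond (fun i => A i :\ x) (P :\ i0).
Proof.
move=> surplus i0P K sK; rewrite bigcup_setD.
have [->|nzK] := eqVneq K set0; first by rewrite cards0.
have sKP : K \subset P by apply: subset_trans sK (subsetDl P _).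
have nKP : K != P.
  by apply: contraTneq i0P => <-; apply/negP => /(subsetP sK); rewrite !inE eqxx.
have := surplus K sKP nzK nKP.
rewrite (cardsD1 x (\bigcup_(i in K) A i)); case: (x \in _); lia.
Qed.

Theorem hall_marriage A P (x0 : T) : hall_cond A P -> exists f, is_sdr A P f.
Proof.
have [n] := ubnP #|P|; elim: n A P => // n IH A P ltPn hP.
have IHlt (B : I -> {set T}) (Q : {set I}) :
    #|Q| < #|P| -> hall_cond B Q -> exists f, is_sdr B Q f.
  by move=> ltQP; apply: IH; apply: leq_trans ltQP _.
(* Either some proper non-empty J is tight, and P splits into J and P - J,
   or every such J has surplus, and any i0 can be matched to any x in A i0. *)
have [|] := boolP [exists J : {set I}, [&& J \subset P, J != set0, J != P &
                     #|\bigcup_(i in J) A i| <= #|J|]].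
  case/existsP=> J /and4P[sJP nJ0 nJP tightJ].
  have ltJP : #|J| < #|P| by rewrite proper_card // properEneq nJP sJP.
  have [f1 sdr1] := IHlt A J ltJP (hall_cond_sub sJP hP).
  have ltDP : #|P :\: J| < #|P|.
    by rewrite cardsDS //; have := ltJP; rewrite -card_gt0 in nJ0; lia.
  have [f2 sdr2] := IHlt _ _ ltDP (hall_cond_tight hP sJP tightJ).
  exists (fun i => if i \in J then f1 i else f2 i); apply: (is_sdr_glue sdr1 _ sdr2).
  by move=> i iJ; apply/bigcupP; exists i; last by case: sdr1 => /(_ i iJ).
rewrite negb_exists => /forallP noTight.
have surplus J : J \subset P -> J != set0 -> J != P -> #|J| < #|\bigcup_(i in J) A i|.
  by move=> sJP nJ0 nJP; have := noTight J; rewrite sJP nJ0 nJP /= -ltnNge.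
have [P0|[i0 i0P]] := set_0Vmem P.
  by exists (fun _ => x0); split=> [i|i j]; rewrite P0 inE.
have /set0Pn[x xA] : A i0 != set0.
  by rewrite -card_gt0; have := hP [set i0]; rewrite big_set1 cards1 sub1set i0P; apply.
have ltDP : #|P :\ i0| < #|P| by rewrite (cardsD1 i0 P) i0P.
have [f2 sdr2] := IHlt _ _ ltDP (hall_cond_surplus x surplus i0P).
exists (fun i => if i \in [set i0] then x else f2 i); apply: is_sdr_glue _ _ sdr2.
  by split=> [i /set1P-> | i j /set1P-> /set1P->].
by move=> i _; rewrite inE.
Qed.

End Hall.

Section ThinFamilies.

Set Implicit Arguments.
Unset Strict Implicit.

Variables (X : finType) (r : nat) (tau : {set {set X}}).

Lemma thin_card (tau' : {set {set X}}) :
  thin r tau -> tau' \subset tau -> tau' != set0 -> #|tau'| + r <= #|Lset tau'| + 1.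
Proof. by move=> thin_tau sub nz; have := thin_tau _ sub nz; rewrite /exc; lia. Qed.

Lemma sum_ndeg : \sum_x ndeg tau x = \sum_(S in tau) #|S|.
Proof.
transitivity (\sum_x \sum_(S in tau | x \in S) 1).
  by apply: eq_bigr => x _; rewrite sum1dep_card.
rewrite (exchange_big_dep (fun S => S \in tau)) => [|x S _ /andP[] //].
apply: eq_bigr => S St.
by rewrite sum1dep_card; apply: eq_card => x; rewrite inE St.
Qed.

Lemma uniform_ndeg_small : (forall S, S \in tau -> #|S| = r) -> 0 < r ->
  #|tau| < #|X| -> exists x, ndeg tau x < r.
Proof.
move=> unif r_gt0 lt_tau_X; apply/existsP; apply: contraLR lt_tau_X.
rewrite negb_exists -leqNgt => /forallP deg_ge.
have : \sum_(x : X) r <= \sum_x ndeg tau x.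
  by apply: leq_sum => x _; rewrite leqNgt deg_ge.
by rewrite sum_ndeg (eq_bigr (fun=> r) unif) !sum_nat_const leq_pmul2r.
Qed.

Lemma thin_hall_cond (B : {set X}) : thin r tau -> #|B| < r ->
  hall_cond (fun S => S :\: B) tau.
Proof.
move=> thin_tau ltBr J sJ; rewrite bigcup_setD.
have [->|nzJ] := eqVneq J set0; first by rewrite cards0.
have := thin_card thin_tau sJ nzJ.
change (#|J| + r <= #|Lset J| + 1 -> #|J| <= #|Lset J :\: B|).
have := cardsID B (Lset J); have := subset_leq_card (subsetIr (Lset J) B); lia.
Qed.

End ThinFamilies.

Theorem lemma1 (X : finType) (r : nat) (tau : {set {set X}}) :
  (2 <= r)%N ->
  tau != set0 ->
  (forall S, S \in tau -> #|S| = r) ->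
  Lset tau = [set: X] ->
  thin r tau ->
  [/\ (#|tau| <= #|X| - r + 1)%N,
      (exists x : X, (ndeg tau x <= r - 1)%N)
    & (forall B : {set X}, #|B| = r.-1 ->
         has_SDR tau (fun S => S :\: B))].
Proof.
move=> r_ge2 nz_tau unif cover thin_tau.
have card_tau := thin_card thin_tau (subxx tau) nz_tau.
rewrite cover cardsT in card_tau.
split; first by lia.
  have [x deg_x] : exists x, ndeg tau x < r.
    by apply: (uniform_ndeg_small unif); lia.
  by exists x; lia.
move=> B cardB.
have [S0 S0tau] := set0Pn _ nz_tau.
have [x0 _] : exists x0, x0 \in S0 by apply/set0Pn; rewrite -card_gt0 unif //; lia.
by apply: hall_marriage x0 _; apply: (thin_hall_cond thin_tau); lia.
Qed.
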